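(* Let $A=kQ/I$ be a toupie algebra over a field $k$ of characteristic zero. The set $K=\{s\}\cup C'_1\cup C_3$ is a basis of $\operatorname{Im}D_0$, where $s=\sum_{\alpha^{(i)}}\alpha^i_0\|\alpha^i_0$ (sum over all branches of $Q$), $C'_1=\{\alpha^i_j\|\alpha^i_j-\alpha^i_0\|\alpha^i_0: j\ne0,\ \alpha^{(i)}\text{ a branch containing monomial relations}\}$ and $C_3=\{\alpha^i_j\|\alpha^i_j-\alpha^i_0\|\alpha^i_0: j\ne0,\ \alpha^{(i)}\text{ of length }>1\text{ containing no monomial relation}\}$.
   Context: A finite quiver $Q$ is a toupie quiver if it has a unique source $0$, a unique sink $\omega$, and every other vertex is the source of exactly one arrow and the target of exactly one arrow. Paths are composed left to right. A branch is a path from $0$ to $\omega$; the arrows of a branch $\alpha^{(i)}$ are $\alpha^i_0,\alpha^i_1,\dots$ in order, $\alpha^i_0$ starting at $0$. A toupie algebra is $A=kQ/I$ with $Q$ toupie and $I$ an admissible ideal generated by monomial relations (paths inside one branch) and non-monomial relations (linear combinations of branches). $E=kQ_0$, $e_x$ the trivial path at $x$. For an arrow $\gamma$ and $h\in e_{s(\gamma)}Ae_{t(\gamma)}$, $\gamma\|h$ is the $E$-bimodule map $kQ_1\to A$ sending $\gamma$ to $h$ and other arrows to $0$; $e_x\|e_x\in\mathrm{Hom}_{E^e}(E,A)$ sends $e_x$ to $e_x$ and other idempotents to $0$. $D_0:\mathrm{Hom}_{E^e}(E,A)\to\mathrm{Hom}_{E^e}(kQ_1,A)$ is the linear map with $D_0(e_x\|e_x)=\sum_{t(\gamma)=x}\gamma\|\gamma-\sum_{s(\gamma)=x}\gamma\|\gamma$.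 *)

From HB Require Import structures.
From mathcomp Require Import all_boot all_order all_algebra.
From Stdlib Require List.
Set Implicit Arguments. Unset Strict Implicit. Unset Printing Implicit Defensive.
Import GRing.Theory.
Local Open Scope ring_scope.

Section Quiver.
Variables (V Ar : finType) (src tgt : Ar -> V).

(* A path is (starting vertex, list of arrows); (x, [::]) is e_x.
   Paths are composed left to right. *)
Definition Pth := (V * seq Ar)%type.
Definition comp_rel : rel Ar := fun a b => tgt a == src b.
Definition valid_path (p : Pth) : bool :=
  match p.2 with [::] => true | a :: l => (src a == p.1) && path comp_rel a l end.
Definition pend (p : Pth) : V := last p.1 [seq tgt a | a <- p.2].

Definition is_source (x : V) : bool := [forall a, tgt a != x].
Definition is_sink (x : V) : bool := [forall a, src a != x].

(* Q is a toupie quiver with source o (= 0) and sink w (= omega). *)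
Definition toupie_quiver (o w : V) : Prop :=
  [/\ o != w,
      forall x, is_source x <-> x = o,
      forall x, is_sink x <-> x = w &
      forall x, x != o -> x != w ->
        #|[pred a | src a == x]| = 1%N /\ #|[pred a | tgt a == x]| = 1%N].

Definition is_branch (o w : V) (b : seq Ar) : bool :=
  valid_path (o, b) && (pend (o, b) == w).

Variable k : fieldType.

(* Elements of kQ are functions Pth -> k that are finitely supported and
   supported on valid paths; the multiplication below is the convolution
   over the factorisations of a path (concatenation of paths). *)
Definition kfun := Pth -> k.
Definition kQel (f : kfun) : Prop :=
  (forall p, f p != 0 -> valid_path p) /\
  exists s : seq Pth, forall p, f p != 0 -> p \in s.
Definition pth (p : Pth) : kfun := fun q => (q == p)%:R.
Definition pmulf (f g : kfun) : kfun := fun p =>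
  \sum_(i < (size p.2).+1)
     f (p.1, take i p.2) * g (pend (p.1, take i p.2), drop i p.2).

(* The two-sided ideal I of kQ generated by the monomial relations [mons]
   and the non-monomial relations [nmons]. *)
Definition inI (mons : seq Pth) (nmons : seq kfun) (f : kfun) : Prop :=
  exists ts : seq (kfun * kfun * kfun),
    (forall t, List.In t ts ->
       [/\ kQel t.1.1, kQel t.2 &
           (exists m, m \in mons /\ t.1.2 = pth m) \/ List.In t.1.2 nmons]) /\
    forall p, f p = \sum_(t <- ts) pmulf (pmulf t.1.1 t.1.2) t.2 p.

Definition toupie_rels (o w : V) (mons : seq Pth) (nmons : seq kfun) : Prop :=
  (forall m, m \in mons ->
     [/\ valid_path m, m.2 != [::] & exists b, is_branch o w b /\ infix m.2 b]) /\
  (forall r, List.In r nmons ->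
     kQel r /\ forall p, r p != 0 -> p.1 = o /\ is_branch o w p.2).

(* I is admissible: R^m <= I <= R^2 (R = arrow ideal; R^n is spanned by the
   paths of length >= n). *)
Definition admissible (mons : seq Pth) (nmons : seq kfun) : Prop :=
  exists m : nat, (2 <= m)%N /\
    (forall p, valid_path p -> (m <= size p.2)%N -> inI mons nmons (pth p)) /\
    (forall f, inI mons nmons f -> forall p, (size p.2 < 2)%N -> f p = 0).

(* Hom_{E^e}(kQ_1, A): an E-bimodule map phi is given by the family of
   representatives (in kQ) of the elements phi(gamma) of A = kQ/I. *)
Definition homE := Ar -> kfun.
Definition hom_eq mons nmons (phi psi : homE) : Prop :=
  forall g, inI mons nmons (fun p => phi g p - psi g p).
Definition hom0 : homE := fun _ _ => 0.

Definition bar (g : Ar) (h : kfun) : homE := fun d => if d == g then h else (fun _ => 0).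
Definition arr (g : Ar) : kfun := pth (src g, [:: g]).
Definition barr (g : Ar) : homE := bar g (arr g).

Definition D0 (x : V) : homE := fun d p =>
  \sum_(g | tgt g == x) barr g d p - \sum_(g | src g == x) barr g d p.

(* membership in Im D_0 (Im D_0 = span of the D_0(e_x||e_x)) *)
Definition inImD0 mons nmons (phi : homE) : Prop :=
  exists c : V -> k, hom_eq mons nmons phi (fun d p => \sum_x c x * D0 x d p).

Definition alphabar (b : seq Ar) (j : nat) : homE :=
  if onth b j is Some a then barr a else hom0.

Definition sK (bs : seq (seq Ar)) : homE := fun d p => \sum_(b <- bs) alphabar b 0 d p.
Definition kel (b : seq Ar) (j : nat) : homE := fun d p => alphabar b j d p - alphabar b 0 d p.

Definition has_monomial (mons : seq Pth) (b : seq Ar) : bool :=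
  has (fun m : Pth => infix m.2 b) mons.
Definition idxC1' mons (b : seq Ar) (j : nat) : bool :=
  has_monomial mons b && (0 < j < size b)%N.
Definition idxC3 mons (b : seq Ar) (j : nat) : bool :=
  (1 < size b)%N && ~~ has_monomial mons b && (0 < j < size b)%N.
Definition idxK mons b j : bool := idxC1' mons b j || idxC3 mons b j.

Definition Kcomb mons bs (d0 : k) (d : seq Ar -> nat -> k) : homE := fun g p =>
  d0 * sK bs g p +
  \sum_(b <- bs) \sum_(j < size b | idxK mons b j) d b j * kel b j g p.

Definition K_basis_ImD0 mons nmons bs : Prop :=
  [/\ inImD0 mons nmons (sK bs),
      forall b j, b \in bs -> idxK mons b j -> inImD0 mons nmons (kel b j),
      forall phi, inImD0 mons nmons phi ->
        exists d0 d, hom_eq mons nmons phi (Kcomb mons bs d0 d) &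
      forall d0 d, hom_eq mons nmons (Kcomb mons bs d0 d) hom0 ->
        d0 = 0 /\ forall b j, b \in bs -> idxK mons b j -> d b j = 0].

End Quiver.

(* Every map in play is diagonal, gamma |-> lambda(gamma) gamma, and modulo I a
   diagonal map vanishes only if lambda = 0, because I lies in R^2 and so vanishes
   on arrows.  The combination sum_x c(x) D_0(e_x||e_x) is the diagonal map with
   coefficient c(t gamma) - c(s gamma).  Internal vertices have exactly one
   incoming and one outgoing arrow, and admissibility rules out oriented cycles
   away from the branches, so every arrow sits at a unique position of a unique
   branch; along a branch the coefficients of Im D_0 telescope to c(omega) - c(0).
   Hence a diagonal map lies in Im D_0 iff its coefficients have the same sum along
   every branch, and s (first arrows) together with the differences
   alpha_j||alpha_j - alpha_0||alpha_0 (j > 0) form a basis of these. *)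

From HB Require Import structures.
From mathcomp Require Import all_boot all_order all_algebra.
From mathcomp Require Import zify ring.
Set Implicit Arguments. Unset Strict Implicit. Unset Printing Implicit Defensive.
Import GRing.Theory.
Local Open Scope ring_scope.

Lemma onth_some (T : Type) (s : seq T) i : (i < size s)%N -> exists y, onth s i = Some y.
Proof. by rewrite -onthTE; case: onth => [y|] //; exists y. Qed.

Lemma onth_leq_some (T : Type) (s : seq T) i j x :
  (i <= j)%N -> onth s j = Some x -> exists y, onth s i = Some y.
Proof. by move=> ij hx; apply: onth_some; rewrite (leq_ltn_trans ij) // -onthTE hx. Qed.

Lemma sum_onth (R : nmodType) (T : Type) (s : seq T) (F : T -> R) :
  \sum_(j < size s) oapp F 0 (onth s j) = \sum_(x <- s) F x.
Proof. by elim: s => [|x s IH]; rewrite ?big_ord0 ?big_nil // big_ord_recl big_cons IH. Qed.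

Lemma sum_ord_pos (R : zmodType) n (F : 'I_n.+1 -> R) :
  \sum_(j < n.+1 | (0 < j)%N) F j = \sum_(j < n.+1) F j - F ord0.
Proof. by rewrite [in RHS](bigD1 ord0) //= addrC addrK; apply: eq_bigl => j; rewrite lt0n. Qed.

Lemma sum_pred1_seq (R : nmodType) (T : eqType) (s : seq T) x (F : T -> R) :
  uniq s -> x \in s -> \sum_(y <- s | y == x) F y = F x.
Proof.
move=> us xs; rewrite big_mkcond (bigD1_seq x) //= eqxx big1 ?addr0 //.
by move=> y /negbTE ->.
Qed.

Section ToupieQuiver.
Variables (V Ar : finType) (src tgt : Ar -> V) (o w : V).
Hypothesis HQ : toupie_quiver src tgt o w.
Notation chain := (path (comp_rel src tgt)).
Notation branch := (is_branch src tgt o w).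

Lemma source_neq_sink : o != w. Proof. by case: HQ. Qed.

Lemma tgt_neq_source a : tgt a != o.
Proof. by case: HQ => _ /(_ o) [_ /(_ erefl) /forallP]. Qed.

Lemma src_neq_sink a : src a != w.
Proof. by case: HQ => _ _ /(_ w) [_ /(_ erefl) /forallP]. Qed.

Lemma exists_in_arrow x : x != o -> exists a, tgt a = x.
Proof.
case: HQ => _ /(_ x) [srcx _] _ _ /eqP xo.
have /existsP [a /negPn /eqP] : ~~ is_source tgt x by apply/negP => /srcx.
by exists a.
Qed.

Lemma exists_out_arrow x : x != w -> exists a, src a = x.
Proof.
case: HQ => _ _ /(_ x) [sinkx _] _ /eqP xw.
have /existsP [a /negPn /eqP] : ~~ is_sink src x by apply/negP => /sinkx.
by exists a.
Qed.

Lemma eq_tgt_internal a g : tgt a != w -> (tgt g == tgt a) = (g == a).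
Proof.
move=> aw; apply/eqP/eqP => [tg|-> //]; case: HQ => _ _ _ /(_ _ (tgt_neq_source a) aw).
case=> _ /eqP; rewrite eqn_leq => /andP [/card_le1_eqP one _].
by apply: one; rewrite inE ?tg.
Qed.

Lemma eq_src_internal a g : src a != o -> (src g == src a) = (g == a).
Proof.
move=> ao; apply/eqP/eqP => [sg|-> //]; case: HQ => _ _ _ /(_ _ ao (src_neq_sink a)).
case=> /eqP + _; rewrite eqn_leq => /andP [/card_le1_eqP one _].
by apply: one; rewrite inE ?sg.
Qed.

Lemma branch_head b x : branch b -> onth b 0 = Some x -> src x = o.
Proof. by case: b => [|a l] // /andP [/andP [/= /eqP + _] _] [<-]. Qed.

Lemma branch_adj b i x y : branch b -> onth b i = Some x -> onth b i.+1 = Some y ->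
  tgt x = src y.
Proof.
case: b => [|a l]; first by rewrite onth0n.
move=> /andP [/andP [_ /= /pathP chain_l] _] hx hy.
have il : (i < size l)%N by rewrite -onthTE hy.
by move/eqP: (chain_l a i il); rewrite (onth_nth a x _ _ hx) (onth_nth a y _ _ hy).
Qed.

Lemma branch_end b i x : branch b -> onth b i = Some x -> onth b i.+1 = None ->
  tgt x = w.
Proof.
case: b => [|a l]; first by rewrite onth0n.
move=> /andP [_ /eqP <-] hx hy.
have il : i = size l.
  by move: (onthTE (a :: l) i) (onthTE (a :: l) i.+1); rewrite hx hy /=; lia.
by rewrite /pend /= last_map -(onth_nth a x _ _ hx) il /= -last_nth.
Qed.

Lemma branch_src_neq_source b i x : branch b -> onth b i.+1 = Some x -> src x != o.
Proof.
move=> Bb hx; have [y hy] := onth_leq_some (leqnSn i) hx.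
by rewrite -(branch_adj Bb hy hx) tgt_neq_source.
Qed.

Lemma branch_next b i x y : branch b -> onth b i = Some x -> tgt x = src y ->
  onth b i.+1 = Some y.
Proof.
move=> Bb hx xy; case E: (onth b i.+1) => [y'|].
  have yo : src y != o by rewrite -xy tgt_neq_source.
  by congr Some; apply/eqP; rewrite -(eq_src_internal _ yo) -(branch_adj Bb hx E) xy.
by move: (src_neq_sink y); rewrite -xy (branch_end Bb hx E) eqxx.
Qed.

Lemma branch_prev b i x y : branch b -> onth b i.+1 = Some y -> tgt x = src y ->
  onth b i = Some x.
Proof.
move=> Bb hy xy; have [x' hx'] := onth_leq_some (leqnSn i) hy.
have xw : tgt x != w by rewrite xy src_neq_sink.
rewrite hx'; congr Some; apply/eqP.
by rewrite -(eq_tgt_internal _ xw) (branch_adj Bb hx' hy) xy.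
Qed.

Lemma branch_prefix_uniq b b' i i' x : branch b -> branch b' ->
  onth b i = Some x -> onth b' i' = Some x ->
  i = i' /\ forall t, (t <= i)%N -> onth b t = onth b' t.
Proof.
move=> Bb Bb'; elim: i i' x => [|i IH] [|i'] x hx hx'.
- by split=> // t; rewrite leqn0 => /eqP ->; rewrite hx hx'.
- by move: (branch_src_neq_source Bb' hx'); rewrite (branch_head Bb hx) eqxx.
- by move: (branch_src_neq_source Bb hx); rewrite (branch_head Bb' hx') eqxx.
have [y hy] := onth_leq_some (leqnSn i) hx.
have [ii' agree] := IH i' y hy (branch_prev Bb' hx' (branch_adj Bb hy hx)).
subst i'; split=> // t; rewrite leq_eqVlt => /orP [/eqP ->|]; first by rewrite hx hx'.
exact: agree.
Qed.

Lemma branch_suffix_uniq b b' i : branch b -> branch b' -> onth b i = onth b' i ->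
  forall t, (i <= t)%N -> onth b t = onth b' t.
Proof.
move=> Bb Bb' hi t /subnKC <-; elim: (t - i)%N => [|n IH]; first by rewrite addn0.
rewrite addnS; case E1: (onth b (i + n).+1) => [y|].
  have [x hx] := onth_leq_some (leqnSn _) E1.
  by rewrite (branch_next Bb' (etrans (esym IH) hx) (branch_adj Bb hx E1)).
case E2: (onth b' (i + n).+1) => [y|] //.
have [x hx] := onth_leq_some (leqnSn _) E2.
by rewrite (branch_next Bb (etrans IH hx) (branch_adj Bb' hx E2)) in E1.
Qed.

Lemma branch_pos_uniq b b' i i' x : branch b -> branch b' ->
  onth b i = Some x -> onth b' i' = Some x -> b = b' /\ i = i'.
Proof.
move=> Bb Bb' hx hx'; have [ii' prefix] := branch_prefix_uniq Bb Bb' hx hx'.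
subst i'; split=> //; apply: eq_from_onth => t.
case: (leqP t i) => [/prefix //|/ltnW it].
by apply: branch_suffix_uniq it; rewrite // hx hx'.
Qed.

Lemma walk_back n g :
  exists a l, [/\ chain a l, last a l = g & (n <= size l)%N \/ src a = o].
Proof.
elim: n g => [|n IH] g; first by exists g, [::]; split=> //; left.
have [go|gno] := eqVneq (src g) o; first by exists g, [::]; split=> //; right.
have [h hg] := exists_in_arrow gno; have [a [l [cl lh long]]] := IH h.
exists a, (rcons l g); rewrite rcons_path cl lh last_rcons size_rcons /comp_rel hg eqxx.
by split.
Qed.

Lemma walk_fwd n g : exists l, chain g l /\ ((n <= size l)%N \/ tgt (last g l) = w).
Proof.
elim: n g => [|n IH] g; first by exists [::]; split=> //; left.
have [gw|gnw] := eqVneq (tgt g) w; first by exists [::]; split=> //; right.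
have [h hg] := exists_out_arrow gnw; have [l [cl long]] := IH h.
exists (h :: l); rewrite /= cl /comp_rel hg eqxx.
by split.
Qed.

Lemma long_chain_or_branch n g :
  (exists a l, [/\ chain a l, g \in a :: l & (n <= size l)%N]) \/
  exists2 b, branch b & g \in b.
Proof.
have [a [l [cl lg back]]] := walk_back n g; have [l' [cl' fwd]] := walk_fwd n g.
have cll' : chain a (l ++ l') by rewrite cat_path cl lg cl'.
have gin : g \in a :: l ++ l' by rewrite -cat_cons mem_cat -lg mem_last.
case: back => [nl|ao].
  by left; exists a, (l ++ l'); rewrite size_cat (leq_trans nl (leq_addr _ _)).
case: fwd => [nl'|tw].
  by left; exists a, (l ++ l'); rewrite size_cat (leq_trans nl' (leq_addl _ _)).
right; exists (a :: l ++ l') => //.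
by rewrite /is_branch /valid_path /= ao eqxx cll' /pend /= last_map last_cat lg tw eqxx.
Qed.

End ToupieQuiver.

Section Branches.
Variables (V Ar : finType) (src tgt : Ar -> V) (o w : V) (bs : seq (seq Ar)).
Hypothesis HQ : toupie_quiver src tgt o w.
Hypothesis bsE : forall b, (b \in bs) = is_branch src tgt o w b.

Definition on_branch (g : Ar) : bool := has (fun b => g \in b) bs.

Lemma on_branchP g : reflect (exists b i, b \in bs /\ onth b i = Some g) (on_branch g).
Proof.
apply: (iffP hasP) => [[b B /onthP [i hi]]|[b [i [B hi]]]]; first by exists b, i.
by exists b => //; apply/onthP; exists i.
Qed.

Lemma on_branch_adj h h' : tgt h = src h' -> on_branch h = on_branch h'.
Proof.
move=> hh'; apply/idP/idP => /on_branchP [b [i [B hi]]]; rewrite bsE in B.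
  by apply/on_branchP; exists b, i.+1; rewrite bsE (branch_next HQ B hi hh').
case: i hi => [|i] hi.
  by move: (tgt_neq_source HQ h); rewrite hh' (branch_head B hi) eqxx.
by apply/on_branchP; exists b, i; rewrite bsE (branch_prev HQ B hi hh').
Qed.

Lemma on_branch_chain a l : path (comp_rel src tgt) a l ->
  {in a :: l, forall x, on_branch x = on_branch a}.
Proof.
elim: l a => [|y l IH] a /=; first by move=> _ x; rewrite inE => /eqP ->.
move=> /andP [/eqP ay cl] x; rewrite inE => /predU1P [-> //|xl].
by rewrite (IH y cl x) ?inE ?xl ?orbT // (on_branch_adj ay).
Qed.

Lemma onth_branches_eq b i g b' j : b \in bs -> onth b i = Some g -> b' \in bs ->
  (onth b' j == Some g) = (b' == b) && (j == i).
Proof.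
move=> B hi B'; apply/eqP/andP => [hj|[/eqP -> /eqP -> //]].
by rewrite bsE in B; rewrite bsE in B'; have [-> ->] := branch_pos_uniq HQ B' B hj hi.
Qed.

Lemma src_eq_source_at b i g : b \in bs -> onth b i = Some g -> (src g == o) = (i == 0%N).
Proof.
rewrite bsE => B; case: i => [|i] hi; first by rewrite (branch_head B hi) !eqxx.
by rewrite (negbTE (branch_src_neq_source HQ B hi)).
Qed.

End Branches.

Section IdealSupport.
Variables (V Ar : finType) (src tgt : Ar -> V) (k : fieldType).
Variables (mons : seq (Pth V Ar)) (nmons : seq (kfun V Ar k)) (P : pred Ar).

Lemma pmulf_avoid (f r g : kfun V Ar k) p :
  (forall q, r q != 0 -> has P q.2) -> ~~ has P p.2 -> pmulf tgt (pmulf tgt f r) g p = 0.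
Proof.
move=> rP pP; rewrite /pmulf; apply: big1 => i _; rewrite big1 ?mul0r // => j _ /=.
set q := (X in r X); have [->|/rP /hasP [x xq Px]] := eqVneq (r q) 0; first by rewrite mulr0.
by case/hasP: pP; exists x; rewrite // (mem_take (mem_drop xq)).
Qed.

Lemma inI_avoid f p :
  (forall r, (exists m, m \in mons /\ r = pth k m) \/ List.In r nmons ->
     forall q, r q != 0 -> has P q.2) ->
  inI src tgt mons nmons f -> ~~ has P p.2 -> f p = 0.
Proof.
move=> gensP [ts [tsI ->]] pP; elim: ts tsI => [|t ts IH] tsI; first by rewrite big_nil.
rewrite big_cons IH ?addr0 => [|u tsu]; last by apply: tsI; right.
by have [_ _ /gensP tP] := tsI t (or_introl erefl); apply: pmulf_avoid.
Qed.

End IdealSupport.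

Section DiagonalHoms.
Variables (V Ar : finType) (src tgt : Ar -> V) (k : fieldType).
Variables (mons : seq (Pth V Ar)) (nmons : seq (kfun V Ar k)).

Definition diag_hom (lam : Ar -> k) : homE V Ar k := fun g p => lam g * arr src k g p.
Definition coboundary (c : V -> k) (g : Ar) : k := c (tgt g) - c (src g).

Lemma arr_arrow g : arr src k g (src g, [:: g]) = 1.
Proof. by rewrite /arr /pth eqxx. Qed.

Lemma barrE h g p : barr src k h g p = (h == g)%:R * arr src k g p.
Proof. by rewrite /barr /bar eq_sym; case: eqP => [->|_]; rewrite ?mul1r ?mul0r. Qed.

Lemma alphabarE b j g p : alphabar src k b j g p = (onth b j == Some g)%:R * arr src k g p.
Proof. by rewrite /alphabar; case: onth => [a|] /=; rewrite ?barrE ?mul0r. Qed.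

Lemma D0_combE (c : V -> k) g p :
  \sum_x c x * D0 src tgt k x g p = diag_hom (coboundary c) g p.
Proof.
have sum_barr (P : pred Ar) : \sum_(h | P h) barr src k h g p = (P g)%:R * arr src k g p.
  rewrite big_mkcond (bigD1 g) //= barrE eqxx mul1r big1 ?addr0 => [|h /negbTE hg].
    by case: (P g); rewrite ?mul1r ?mul0r.
  by rewrite barrE hg mul0r; case: (P h).
rewrite /D0 /diag_hom /coboundary; under eq_bigr do rewrite !sum_barr -mulrBl mulrA.
rewrite -big_distrl /=; congr (_ * _); under eq_bigr do rewrite mulrBr.
have pick y : \sum_x c x * (y == x)%:R = c y.
  rewrite (bigD1 y) //= eqxx mulr1 big1 ?addr0 // => x.
  by rewrite eq_sym => /negbTE ->; rewrite mulr0.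
by rewrite sumrB !pick.
Qed.

Lemma sum_coboundary_path c a l : path (comp_rel src tgt) a l ->
  \sum_(x <- a :: l) coboundary c x = c (tgt (last a l)) - c (src a).
Proof.
elim: l a => [|y l IH] a /=; first by rewrite big_seq1.
by move=> /andP [/eqP ay cl]; rewrite big_cons IH // /coboundary ay addrC subrKA.
Qed.

Lemma hom_eq_ext (phi psi : homE V Ar k) :
  (forall g p, phi g p = psi g p) -> hom_eq src tgt mons nmons phi psi.
Proof. by move=> e g; exists [::]; split=> // p; rewrite big_nil e subrr. Qed.

Lemma hom_eq_trans_ext (phi psi chi : homE V Ar k) :
  hom_eq src tgt mons nmons phi psi -> (forall g p, psi g p = chi g p) ->
  hom_eq src tgt mons nmons phi chi.
Proof. by move=> h e g; have [ts [tsI E]] := h g; exists ts; split=> // p; rewrite -e. Qed.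

Lemma hom_eq0_arrow (phi : homE V Ar k) g : admissible src tgt mons nmons ->
  hom_eq src tgt mons nmons phi (hom0 k) -> phi g (src g, [:: g]) = 0.
Proof. by case=> m [_ [_ short]] /(_ g) /short /(_ (src g, [:: g]) erefl); rewrite subr0. Qed.

End DiagonalHoms.

Lemma idxKE (V Ar : finType) (mons : seq (Pth V Ar)) (b : seq Ar) j :
  idxK mons b j = (0 < j < size b)%N.
Proof.
rewrite /idxK /idxC1' /idxC3; case: has_monomial; rewrite /= ?andbF ?orbF //.
by apply/andP/idP => [[] //|jb]; split=> //; lia.
Qed.

Section ImD0.
Variables (V Ar : finType) (src tgt : Ar -> V) (o w : V) (k : fieldType).
Variables (mons : seq (Pth V Ar)) (nmons : seq (kfun V Ar k)) (bs : seq (seq Ar)).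
Hypothesis HQ : toupie_quiver src tgt o w.
Hypothesis Hrels : toupie_rels src tgt o w mons nmons.
Hypothesis Hadm : admissible src tgt mons nmons.
Hypothesis bsE : forall b, (b \in bs) = is_branch src tgt o w b.
Hypothesis bs_uniq : uniq bs.
Notation branch := (is_branch src tgt o w).
Notation hom_eq := (hom_eq src tgt mons nmons).
Notation inImD0 := (inImD0 src tgt mons nmons).

Lemma relations_meet_branches r :
  (exists m, m \in mons /\ r = pth k m) \/ List.In r nmons ->
  forall q, r q != 0 -> has (on_branch bs) q.2.
Proof.
have meets b x : branch b -> x \in b -> on_branch bs x.
  by move=> Bb xb; apply/hasP; exists b; rewrite ?bsE.
case: Hrels => monsP nmonsP [[m [M ->]] q|N q].
  rewrite /pth; case qm: (q == m); last by rewrite eqxx.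
  move=> _; rewrite (eqP qm).
  have [_ + [b [Bb mb]]] := monsP m M; case: m.2 mb => [|x s] // mb _.
  by apply/hasP; exists x; rewrite ?inE ?eqxx // (meets b) // (mem_infix mb) ?inE ?eqxx.
case: (nmonsP r N) => _ /[apply] [[_]]; case: q.2 => [|x s] Bq.
  by move: Bq; rewrite /is_branch /pend /= (negbTE (source_neq_sink HQ)).
by apply/hasP; exists x; rewrite ?inE ?eqxx // (meets _ x Bq) ?inE ?eqxx.
Qed.

(* A long path of arrows off the branches would lie in I, which vanishes on such
   paths: admissibility excludes oriented cycles away from the branches. *)
Lemma all_on_branch g : on_branch bs g.
Proof.
have [m [_ [long_in_I _]]] := Hadm.
have [[a [l [cl gl ml]]]|[b Bb gb]] := long_chain_or_branch HQ m g; last first.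
  by apply/hasP; exists b; rewrite ?bsE.
apply: contraT => off_g.
have off : ~~ has (on_branch bs) (a :: l).
  apply/hasPn => x xl.
  by rewrite (on_branch_chain HQ bsE cl xl) -(on_branch_chain HQ bsE cl gl).
have valid : valid_path src tgt (src a, a :: l) by rewrite /valid_path /= eqxx.
have := inI_avoid (p := (src a, a :: l)) relations_meet_branches
  (long_in_I _ valid (leqW ml)) off.
by rewrite /pth eqxx /= mulr1n => /eqP; rewrite oner_eq0.
Qed.

Lemma arrow_location g : exists b i, b \in bs /\ onth b i = Some g.
Proof. exact/on_branchP/all_on_branch. Qed.

Lemma alphabar_at b i g b' j p : b \in bs -> onth b i = Some g -> b' \in bs ->
  alphabar src k b' j g p = if b' == b then (j == i)%:R * arr src k g p else 0.
Proof.
move=> B hi B'; rewrite alphabarE (onth_branches_eq HQ bsE j B hi B').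
by case: (b' == b); rewrite ?mul0r.
Qed.

Lemma Kcomb_at d0 d b i g p : b \in bs -> onth b i = Some g ->
  Kcomb src mons bs d0 d g p =
  (if i == 0%N then d0 - \sum_(j < size b | (0 < j)%N) d b j else d b i) * arr src k g p.
Proof.
move=> B hi; have ilt : (i < size b)%N by rewrite -onthTE hi.
have kel_sum b' : b' \in bs ->
    \sum_(j < size b' | idxK mons b' j) d b' j * kel src k b' j g p =
    if b' == b then \sum_(j < size b | (0 < j)%N)
      d b j * ((j == i :> nat)%:R - (0 == i)%N%:R) * arr src k g p else 0.
  move=> B'; rewrite /kel; have [->|nb] := eqVneq b' b.
    apply: eq_big => [j|j _]; first by rewrite idxKE ltn_ord andbT.
    by rewrite !(alphabar_at _ _ B hi B) eqxx -mulrBl mulrA.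
  by rewrite big1 // => j _; rewrite !(alphabar_at _ _ B hi B') (negbTE nb) subrr mulr0.
rewrite /Kcomb /sK (eq_big_seq _ (fun b' B' => alphabar_at 0 p B hi B')).
rewrite (eq_big_seq _ kel_sum) -!big_mkcond !sum_pred1_seq // mulrA -big_distrl -mulrDl.
congr (_ * _); have [i0|i0] := eqVneq i 0%N.
  rewrite i0 /= mulr1 -sumrN; congr (_ + _); apply: eq_bigr => j /lt0n_neq0 /negbTE ->.
  by rewrite sub0r mulrN1.
rewrite /= mulr0 add0r (bigD1 (Ordinal ilt)) ?lt0n //= eqxx subr0 mulr1.
rewrite big1 ?addr0 // => j /andP [_ ji]; rewrite subr0.
suff /negbTE -> : (j != i :> nat) by rewrite mulr0.
by apply: contra ji => /eqP ji; apply/eqP/val_inj.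
Qed.

(* D_0(e_v||e_v) at the internal vertex v = t(b_j) = s(b_(j+1)) is
   b_(j+1)||b_(j+1) - b_j||b_j; these differences telescope. *)
Lemma coboundary_branch_indicator b j : branch b -> (j < size b)%N ->
  exists c : V -> k, forall g,
    coboundary src tgt c g = (onth b j == Some g)%:R - (onth b 0 == Some g)%:R.
Proof.
move=> Bb; elim: j => [|j IH] js.
  by exists (fun _ => 0) => g; rewrite /coboundary !subrr.
have [y hy] := onth_some js; have [x hx] := onth_leq_some (leqnSn j) hy.
have [c cE] := IH (ltnW js); have xy := branch_adj Bb hx hy.
have xw : tgt x != w by rewrite xy (src_neq_sink HQ).
have yo : src y != o by rewrite -xy (tgt_neq_source HQ).
exists (fun v => c v - (v == tgt x)%:R) => g; move: (cE g).
rewrite /coboundary hx hy !(inj_eq Some_inj) (eq_tgt_internal HQ g xw).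
rewrite xy (eq_src_internal HQ g yo) !(eq_sym g) => cEg.
by rewrite -(subrK (c (src g)) (c (tgt g))) cEg; ring.
Qed.

Lemma sK_inImD0 : inImD0 (sK src k bs).
Proof.
exists (fun x => - (x == o)%:R); apply: hom_eq_ext => g p.
rewrite D0_combE /diag_hom /coboundary (negbTE (tgt_neq_source HQ g)) oppr0 sub0r opprK.
have [b [i [B hi]]] := arrow_location g.
rewrite /sK (eq_big_seq _ (fun b' B' => alphabar_at 0 p B hi B')) -big_mkcond.
by rewrite sum_pred1_seq // (src_eq_source_at HQ bsE B hi) eq_sym.
Qed.

Lemma kel_inImD0 b j : b \in bs -> idxK mons b j -> inImD0 (kel src k b j).
Proof.
rewrite bsE idxKE => Bb /andP [_ js]; have [c cE] := coboundary_branch_indicator Bb js.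
exists c; apply: hom_eq_ext => g p.
by rewrite D0_combE /diag_hom cE /kel !alphabarE mulrBl.
Qed.

Lemma inImD0_Kcomb phi : inImD0 phi ->
  exists d0 d, hom_eq phi (Kcomb src mons bs d0 d).
Proof.
case=> c phiE; exists (c w - c o), (fun b j => oapp (coboundary src tgt c) 0 (onth b j)).
apply: (hom_eq_trans_ext phiE) => g p; rewrite D0_combE /diag_hom.
have [b [i [B hi]]] := arrow_location g.
rewrite (Kcomb_at _ _ _ B hi) hi /=; case: eqP => // i0; subst i; congr (_ * _).
have := B; rewrite bsE; case: b B hi => [|a l] // B [<-] /andP [/andP [/= /eqP ao cl] /eqP lw].
rewrite /pend /= last_map in lw.
rewrite sum_ord_pos -[(size l).+1]/(size (a :: l)) sum_onth (sum_coboundary_path c cl).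
by rewrite lw ao /= opprB addrC subrK.
Qed.

Lemma Kcomb_eq0 d0 d : hom_eq (Kcomb src mons bs d0 d) (hom0 k) ->
  d0 = 0 /\ forall b j, b \in bs -> idxK mons b j -> d b j = 0.
Proof.
move=> K0; have coef0 b i g : b \in bs -> onth b i = Some g ->
    (if i == 0%N then d0 - \sum_(j < size b | (0 < j)%N) d b j else d b i) = 0.
  move=> B hi; rewrite -[RHS](hom_eq0_arrow g Hadm K0) (Kcomb_at _ _ _ B hi).
  by rewrite arr_arrow mulr1.
have d_eq0 b j : b \in bs -> idxK mons b j -> d b j = 0.
  move=> B; rewrite idxKE => /andP [j0 js]; have [g hg] := onth_some js.
  by have := coef0 _ _ _ B hg; rewrite (negbTE (lt0n_neq0 j0)).
split=> //; have [h ho] := exists_out_arrow HQ (source_neq_sink HQ).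
have [b [i [B hi]]] := arrow_location h.
have := coef0 _ _ _ B hi; rewrite -(src_eq_source_at HQ bsE B hi) ho eqxx.
by rewrite big1 ?subr0 // => j j0; apply: d_eq0; rewrite // idxKE j0 ltn_ord.
Qed.

End ImD0.

Theorem lemma3p4 (k : fieldType) (V Ar : finType) (src tgt : Ar -> V) (o w : V)
    (mons : seq (Pth V Ar)) (nmons : seq (kfun V Ar k)) (bs : seq (seq Ar)) :
  [pchar k] =i pred0 ->
  toupie_quiver src tgt o w ->
  toupie_rels src tgt o w mons nmons ->
  admissible src tgt mons nmons ->
  uniq bs -> (forall b, (b \in bs) = is_branch src tgt o w b) ->
  K_basis_ImD0 src tgt mons nmons bs.
Proof.
move=> _ HQ Hrels Hadm bs_uniq bsE; split.
- exact: sK_inImD0 HQ Hrels Hadm bsE bs_uniq.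
- exact: kel_inImD0 _ HQ bsE.
- exact: inImD0_Kcomb HQ Hrels Hadm bsE bs_uniq.
- exact: Kcomb_eq0 HQ Hrels Hadm bsE bs_uniq.
Qed.
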